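(* Let $X$ be a supertropical semiring and $n\in\mathbb{N}$. For any pure monomial $m$ in $x_1,\dots,x_n$, the minimal symmetrization $\mathrm{Minsym}_n(m)$ is, as a function $X^n\to X$, a product of elementary symmetric polynomials $e_1,\dots,e_n$ in $x_1,\dots,x_n$.
   Context: A semiring $(X,+,0,\cdot)$: $(X,+,0)$ commutative monoid, $(X,\cdot)$ semigroup, distributivity, $0$ absorbing. $\nu(x)=x+x$. A supertropical semiring is a unital commutative semiring with $2=4$ (where $n=1+\dots+1$), such that $a+b\in\{a,b\}$ whenever $\nu(a)\ne\nu(b)$, and $a+b=\nu(a)$ whenever $\nu(a)=\nu(b)$. For a pure monomial $m=x_1^{c_1}\cdots x_n^{c_n}$ (coefficient $1$), $\mathrm{Minsym}_n(m)$ is the sum, each term taken exactly once, of the distinct monomials in $\{x_{\sigma(1)}^{c_1}\cdots x_{\sigma(n)}^{c_n}:\sigma\in S_n\}$ (monomials equal up to reordering of factors are identified). $e_k(x_1,\dots,x_n)$ is the sum of all products of $k$ distinct variables; the empty product is $1$. *)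

From HB Require Import structures.
From mathcomp Require Import all_boot all_order all_algebra all_fingroup.
Set Implicit Arguments. Unset Strict Implicit. Unset Printing Implicit Defensive.
Import GRing.Theory.
Local Open Scope ring_scope.

Definition nu (X : comPzSemiRingType) (x : X) : X := x + x.

Definition supertropical (X : comPzSemiRingType) : Prop :=
  [/\ (2%:R : X) = 4%:R,
      (forall a b : X, nu a <> nu b -> a + b = a \/ a + b = b) &
      (forall a b : X, nu a = nu b -> a + b = nu a)].

(* Exponent vectors of the monomials x_{s(1)}^{c_1} ... x_{s(n)}^{c_n}, s in S_n:
   variable x_j carries exponent c_{s^-1(j)}.  Duplicates removed, so each
   distinct monomial appears exactly once. *)
Definition minsym_exps (n : nat) (c : 'I_n -> nat) : seq {ffun 'I_n -> nat} :=
  undup [seq [ffun j => c ((s^-1)%g j)] | s : 'S_n].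

Definition Minsym (X : comPzSemiRingType) (n : nat) (c : 'I_n -> nat)
    (x : 'I_n -> X) : X :=
  \sum_(a <- minsym_exps c) \prod_(i < n) x i ^+ a i.

Definition elsym (X : comPzSemiRingType) (n k : nat) (x : 'I_n -> X) : X :=
  \sum_(A : {set 'I_n} | #|A| == k) \prod_(i in A) x i.

From HB Require Import structures.
From mathcomp Require Import all_boot all_order all_algebra all_fingroup.
From mathcomp Require Import zify.
Set Implicit Arguments. Unset Strict Implicit. Unset Printing Implicit Defensive.
Import GRing.Theory.
Local Open Scope ring_scope.

(* If k is the number of nonzero exponents of c and c - 1 lowers every positive
   exponent by one, then e_k * Minsym(c - 1) = Minsym c; iterating on the largest
   exponent writes Minsym c as a product of e_1, ..., e_n.
   Expanding e_k * Minsym(c - 1) gives the monomials x^(1_A + a) with |A| = k and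
   a a rearrangement of c - 1.  Those with supp a inside A are exactly the terms of
   Minsym c, each once.  Every other one is absorbed by Minsym c: moving one unit
   of exponent from a variable of A \ supp a to one of supp a \ A yields a monomial
   u which, together with its image v under the transposition of the two variables,
   absorbs it, because y^(p+1) + z^(p+1) + y^p z = y^(p+1) + z^(p+1) (p >= 1) in a
   supertropical semiring; by induction on |supp a \ A|, u and v are themselves
   terms of Minsym c or absorbed by it. *)

Section SemiringAbsorption.
Variable X : comPzSemiRingType.

Lemma nuE (y : X) : nu y = 2%:R * y.
Proof. by rewrite /nu mulr_natl mulr2n. Qed.

Lemma nu_exp (a b : X) k : nu a = nu b -> nu (a ^+ k.+1) = nu (b ^+ k.+1).
Proof.
rewrite !nuE => ab; elim: k => [|k IHk]; first by rewrite !expr1.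
by rewrite exprS mulrCA IHk mulrA (mulrC a) ab -mulrA -exprS.
Qed.

Lemma addr_exp_absorb (a b : X) : a + b = b ->
  forall j m, b ^+ (j + m).+1 + a ^+ j.+1 * b ^+ m = b ^+ (j + m).+1.
Proof.
move=> ab; elim=> [|j IHj] m.
  by rewrite add0n expr1 exprS -mulrDl addrC ab.
rewrite addSn -addnS -{1}(IHj m.+1) -addrA (exprS b m) (exprSr a j.+1) -mulrA.
by rewrite -mulrDr -mulrDl (addrC b) ab -exprS IHj.
Qed.

Hypothesis HX : supertropical X.

Lemma nu_idem (y : X) : nu (nu y) = nu y.
Proof.
case: HX => two_eq_four _ _.
by rewrite !nuE mulrA -natrM two_eq_four.
Qed.

Lemma supertropical_absorb (a b : X) p : (0 < p)%N ->
  a ^+ p.+1 + b ^+ p.+1 + a ^+ p * b = a ^+ p.+1 + b ^+ p.+1.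
Proof.
case: HX => _ add_neq add_eq; case: p => // p _.
have [nu_ab|/eqP nu_ab] := eqVneq (nu a) (nu b).
  have nu_mixed : nu (a ^+ p.+1 * b) = nu (nu (a ^+ p.+2)).
    by rewrite nu_idem !nuE mulrCA -nuE -nu_ab nuE mulrCA -exprSr.
  by rewrite (add_eq _ _ (nu_exp _ nu_ab)) (add_eq _ _ (esym nu_mixed)) nu_idem.
have [ab|ab] := add_neq _ _ nu_ab.
  by rewrite addrAC (exprSr a p.+1) -mulrDr ab.
by rewrite -addrA; have := addr_exp_absorb ab p 1; rewrite addn1 expr1 => ->.
Qed.

End SemiringAbsorption.

Lemma perm_eq_predn (s t : seq nat) :
  perm_eq s t =
  perm_eq (map predn s) (map predn t) && (count_mem 0%N s == count_mem 0%N t).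
Proof.
have count_predn0 u :
    count (preim predn (pred1 0%N)) u = (count_mem 0%N u + count_mem 1%N u)%N.
  rewrite -count_predUI [X in (_ + X)%N](eq_count (a2 := pred0)) ?count_pred0 ?addn0;
    by [apply: eq_count; case=> [|[|]] | case=> [|[|]]].
apply/idP/andP => [st | [/seq.permP st0 /eqP s0]].
  by rewrite perm_map //; split=> //; rewrite (seq.permP st).
apply/allP => -[|[|v]] _; apply/eqP => //.
  by have := st0 (pred1 0%N); rewrite !count_map !count_predn0 s0 => /addnI.
have predn_eq : preim predn (pred1 v.+1) =1 pred1 v.+2 by case.
by have := st0 (pred1 v.+1); rewrite !count_map !(eq_count predn_eq).
Qed.

Lemma codom_comp_perm (T : finType) (U : eqType) (f : T -> U) (s : {perm T}) :
  perm_eq (codom (f \o s)) (codom f).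
Proof.
rewrite !codomE map_comp perm_map // uniq_perm ?enum_uniq //.
  by rewrite (map_inj_uniq (@perm_inj _ s)) enum_uniq.
by move=> i; rewrite mem_enum; apply/mapP; exists ((s^-1)%g i); rewrite ?mem_enum ?permKV.
Qed.

Definition supp n (b : 'I_n -> nat) : {set 'I_n} := [set i | 0 < b i]%N.
Definition decr n (b : 'I_n -> nat) : {ffun 'I_n -> nat} := [ffun i => (b i).-1].
Definition incr n (A : {set 'I_n}) (a : {ffun 'I_n -> nat}) : {ffun 'I_n -> nat} :=
  [ffun i => (i \in A) + a i]%N.

Section ExponentVectors.
Variable n : nat.
Implicit Types (b c : 'I_n -> nat) (A : {set 'I_n}).

Lemma mem_minsym_exps c (b : {ffun 'I_n -> nat}) :
  (b \in minsym_exps c) = perm_eq (codom b) (codom c).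
Proof.
rewrite mem_undup; apply/mapP/idP => [[s _ ->] | bc].
  by rewrite (eq_codom (ffunE _)); exact: codom_comp_perm.
have /tuple_permP[s bs] : perm_eq (codom b) [tuple c i | i < n].
  by rewrite (permPl bc) codomE.
have {}bs j : b j = c (s j).
  move: bs; rewrite codomE /= => /eq_in_map/(_ j (mem_enum _ j)).
  by rewrite tnth_mktuple.
exists (s^-1)%g; rewrite ?mem_enum //.
by apply/ffunP => j; rewrite ffunE invgK bs.
Qed.

Lemma card_supp b : (#|supp b| + count_mem 0%N (codom b))%N = n.
Proof.
have -> : count_mem 0%N (codom b) = #|[pred i | b i == 0%N]|.
  by rewrite codomE count_map cardE size_filter enumT.
rewrite -[RHS]card_ord -(cardC (supp b)); congr (_ + _)%N.
by apply: eq_card => i; rewrite !inE lt0n negbK.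
Qed.

Lemma codom_decr b : codom (decr b) = map predn (codom b).
Proof. by rewrite !codomE -map_comp; apply: eq_map => i; rewrite ffunE. Qed.

Lemma mem_minsym_exps_decr c (b : {ffun 'I_n -> nat}) :
  (b \in minsym_exps c) = (decr b \in minsym_exps (decr c)) && (#|supp b| == #|supp c|).
Proof.
rewrite !mem_minsym_exps perm_eq_predn !codom_decr; congr (_ && _).
by apply/eqP/eqP; have := card_supp b; have := card_supp c; lia.
Qed.

Lemma supp_subset_eq0 A (a : 'I_n -> nat) i :
  supp a \subset A -> i \notin A -> a i = 0%N.
Proof.
move/subsetP=> aA iA; apply/eqP; apply: contraNT iA; rewrite -lt0n => ai.
by apply: aA; rewrite inE.
Qed.

Lemma supp_incr A (a : {ffun 'I_n -> nat}) : supp a \subset A -> supp (incr A a) = A.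
Proof.
move=> aA; apply/setP => i; rewrite !inE ffunE.
by case: (boolP (i \in A)) => // iA; rewrite (supp_subset_eq0 aA iA).
Qed.

Lemma decr_incr A (a : {ffun 'I_n -> nat}) : supp a \subset A -> decr (incr A a) = a.
Proof.
move=> aA; apply/ffunP => i; rewrite !ffunE.
by case: (boolP (i \in A)) => // iA; rewrite (supp_subset_eq0 aA iA).
Qed.

Lemma incr_decr (b : {ffun 'I_n -> nat}) : incr (supp b) (decr b) = b.
Proof. by apply/ffunP => i; rewrite !ffunE inE; case: (b i). Qed.

Lemma supp_decr_subset b : supp (decr b) \subset supp b.
Proof. by apply/subsetP => i; rewrite !inE ffunE; case: (b i). Qed.

Lemma card_supp_minsym c (b : {ffun 'I_n -> nat}) :
  b \in minsym_exps c -> #|supp b| = #|supp c|.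
Proof. by rewrite mem_minsym_exps_decr => /andP[_ /eqP]. Qed.

Lemma incr_minsym_exps c A (a : {ffun 'I_n -> nat}) :
  a \in minsym_exps (decr c) -> supp a \subset A -> #|A| = #|supp c| ->
  incr A a \in minsym_exps c.
Proof.
by move=> ac aA Ac; rewrite mem_minsym_exps_decr decr_incr // supp_incr // ac Ac /=.
Qed.

Lemma minsym_exps_perm c (b : {ffun 'I_n -> nat}) (s : 'S_n) :
  b \in minsym_exps c -> [ffun i => b (s i)] \in minsym_exps c.
Proof.
rewrite !mem_minsym_exps; apply: perm_trans.
by rewrite (eq_codom (ffunE _)); exact: codom_comp_perm.
Qed.

End ExponentVectors.

Definition monomial (X : comPzSemiRingType) n (x : 'I_n -> X) (b : 'I_n -> nat) : X :=
  \prod_(i < n) x i ^+ b i.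

Section MinsymSummands.
Variables (X : comPzSemiRingType) (n : nat).
Implicit Types (c : 'I_n -> nat) (x : 'I_n -> X).

Lemma Minsym_perm_big c x (r : seq {ffun 'I_n -> nat}) :
  uniq r -> r =i minsym_exps c -> Minsym c x = \sum_(b <- r) monomial x b.
Proof. by move=> r_uniq rc; apply/perm_big/uniq_perm; rewrite ?undup_uniq. Qed.

Lemma monomial_perm x (b : 'I_n -> nat) (s : 'S_n) :
  monomial (fun i => x (s i)) b = monomial x (fun i => b ((s^-1)%g i)).
Proof.
rewrite /monomial (reindex_inj (@perm_inj _ (s^-1)%g)) /=.
by apply: eq_bigr => i _; rewrite permKV.
Qed.

Lemma Minsym_perm c x (s : 'S_n) : Minsym c (fun i => x (s i)) = Minsym c x.
Proof.
pose act (g : 'S_n) (b : {ffun 'I_n -> nat}) := [ffun i => b (g i)].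
have actK g : cancel (act g) (act (g^-1)%g).
  by move=> b; apply/ffunP => i; rewrite !ffunE permKV.
rewrite [RHS](@Minsym_perm_big c x (map (act (s^-1)%g) (minsym_exps c))).
- rewrite big_map; apply: eq_bigr => b _.
  by rewrite -[LHS]/(monomial _ b) monomial_perm; apply: eq_bigr => i _; rewrite ffunE.
- by rewrite map_inj_uniq ?undup_uniq //; apply: (can_inj (actK _)).
move=> b; apply/mapP/idP => [[a ac ->] | bc]; first exact: minsym_exps_perm.
by exists (act s b); rewrite ?actK ?minsym_exps_perm.
Qed.

Definition absorbed c (b : 'I_n -> nat) :=
  forall x, Minsym c x + monomial x b = Minsym c x.

(* A term of Minsym c need not absorb itself, since y + y = nu y. *)
Definition covered c (b : {ffun 'I_n -> nat}) := b \in minsym_exps c \/ absorbed c b.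

Lemma covered_perm c (b : {ffun 'I_n -> nat}) (s : 'S_n) :
  covered c b -> covered c [ffun i => b (s i)].
Proof.
case=> [bc | bc]; [left; exact: minsym_exps_perm | right => x].
rewrite -(Minsym_perm c x (s^-1)%g) -[RHS]bc monomial_perm invgK.
by congr (_ + _); apply: eq_bigr => i _; rewrite ffunE.
Qed.

Lemma Minsym_split1 c x (v : {ffun 'I_n -> nat}) :
  covered c v -> exists R, Minsym c x = monomial x v + R.
Proof.
case=> [vc | va]; last by exists (Minsym c x); rewrite addrC va.
exists (\sum_(b <- minsym_exps c | b != v) monomial x b).
by rewrite [LHS](bigD1_seq v) ?undup_uniq.
Qed.

Lemma Minsym_split2 c x (u v : {ffun 'I_n -> nat}) : u != v ->
  covered c u -> covered c v -> exists R, Minsym c x = monomial x u + monomial x v + R.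
Proof.
move=> uv cu cv; case: (cv) => [vc | va]; last first.
  have [R uR] := Minsym_split1 x cu.
  by exists R; rewrite -va {1}uR addrAC.
case: (cu) => [uc | ua]; last first.
  have [R vR] := Minsym_split1 x cv.
  by exists R; rewrite -ua {1}vR addrC addrA.
exists (\sum_(b <- minsym_exps c | (b != u) && (b != v)) monomial x b).
rewrite [LHS](bigD1_seq u) ?undup_uniq // -big_filter.
rewrite (bigD1_seq v) ?filter_uniq ?undup_uniq //.
  by rewrite big_filter_cond; exact: addrA.
by rewrite mem_filter eq_sym uv.
Qed.

End MinsymSummands.

Section Exchange.
Variables (X : comPzSemiRingType) (n : nat).
Hypothesis HX : supertropical X.
Implicit Types (c : 'I_n -> nat) (x : 'I_n -> X).

Lemma monomial_split2 x (b : 'I_n -> nat) i j : i != j ->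
  monomial x b = x i ^+ b i * x j ^+ b j * \prod_(l | (l != i) && (l != j)) x l ^+ b l.
Proof. by move=> ij; rewrite /monomial (bigD1 i) // (bigD1 j) 1?eq_sym //= mulrA. Qed.

Lemma absorbed_exchange c (u b : {ffun 'I_n -> nat}) i j p :
  i != j -> (0 < p)%N -> u i = p.+1 -> u j = 0%N -> b i = p -> b j = 1%N ->
  (forall l, l != i -> l != j -> b l = u l) -> covered X c u -> absorbed X c b.
Proof.
move=> ij p_gt0 ui uj bi bj bu cu x.
pose v := [ffun l => u (tperm i j l)].
have uv : u != v by apply/negP => /eqP/ffunP/(_ i); rewrite ffunE tpermL ui uj.
have [R ->] := Minsym_split2 x uv cu (covered_perm (tperm i j) cu).
pose M := \prod_(l | (l != i) && (l != j)) x l ^+ u l.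
have splitM (w : 'I_n -> nat) : (forall l, l != i -> l != j -> w l = u l) ->
    monomial x w = x i ^+ w i * x j ^+ w j * M.
  move=> wu; rewrite (monomial_split2 _ _ ij); congr (_ * _).
  by apply: eq_bigr => l /andP[li lj]; rewrite wu.
have vu l : l != i -> l != j -> v l = u l by move=> li lj; rewrite ffunE tpermD // eq_sym.
rewrite addrAC (splitM _ bu) (splitM _ vu) (splitM u) // !ffunE tpermL tpermR.
rewrite ui uj bi bj !expr0 !expr1 mulr1 mul1r -!mulrDl.
by rewrite (supertropical_absorb HX _ _ p_gt0).
Qed.

End Exchange.

Section AbsorbedShifts.
Variables (X : comPzSemiRingType) (n : nat).
Hypothesis HX : supertropical X.
Variables (c : 'I_n -> nat) (a : {ffun 'I_n -> nat}).
Hypothesis ac : a \in minsym_exps (decr c).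

Lemma card_supp_decr_le : (#|supp a| <= #|supp c|)%N.
Proof. by rewrite (card_supp_minsym ac) subset_leq_card ?supp_decr_subset. Qed.

Lemma absorbed_incr_step (B : {set 'I_n}) i j :
  i \in supp a :\: B -> j \in B :\: supp a ->
  covered X c (incr (i |: B :\ j) a) -> absorbed X c (incr B a).
Proof.
rewrite !inE => /andP[iB ia] /andP[ja jB].
have ij : i != j by apply: contraNneq iB => ->.
apply: (absorbed_exchange HX (p := a i) ij) => //.
- by rewrite ffunE setU11.
- by rewrite ffunE !inE eqxx eq_sym (negPf ij) /= add0n; apply/eqP; rewrite -leqn0 leqNgt.
- by rewrite ffunE (negPf iB).
- by rewrite ffunE jB; congr (_ + _)%N; apply/eqP; rewrite -leqn0 leqNgt.
- by move=> l li lj; rewrite !ffunE !inE (negPf li) lj.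
Qed.

Lemma exchange_pair (B : {set 'I_n}) m :
  #|B| = #|supp c| -> #|supp a :\: B| = m.+1 ->
  exists i j, [/\ i \in supp a :\: B, j \in B :\: supp a,
    #|i |: B :\ j| = #|supp c| & #|supp a :\: (i |: B :\ j)| = m].
Proof.
move=> cardB mB.
have [i iaB] : exists i, i \in supp a :\: B by apply/card_gt0P; rewrite mB.
have [j jBa] : exists j, j \in B :\: supp a.
  apply/card_gt0P; move: mB; have := card_supp_decr_le.
  rewrite !cardsD setIC -cardB; lia.
exists i, j; split=> //; move: iaB jBa; rewrite !inE => /andP[iB ia] /andP[ja jB].
  by rewrite cardsU1 !inE (negPf iB) andbF -cardB (cardsD1 j B) jB.
have -> : supp a :\: (i |: B :\ j) = (supp a :\: B) :\ i.
  apply/setP => l; rewrite !inE.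
  case: (eqVneq l j) => [-> | _]; first by rewrite (negPf ja) !andbF.
  by rewrite /= negb_or andbA.
by have := cardsD1 i (supp a :\: B); rewrite !inE iB ia mB /=; lia.
Qed.

Lemma absorbed_incr (A : {set 'I_n}) : #|A| = #|supp c| -> ~~ (supp a \subset A) ->
  absorbed X c (incr A a).
Proof.
suff shift m (B : {set 'I_n}) :
    #|B| = #|supp c| -> #|supp a :\: B| = m.+1 -> absorbed X c (incr B a).
  move=> cardA aA; apply: (shift #|supp a :\: A|.-1) => //.
  by rewrite prednK // lt0n cards_eq0 setD_eq0.
elim: m B => [|m IHm] B cardB mB;
  have [i [j [iB jB cardB' mB']]] := exchange_pair cardB mB;
  apply: (absorbed_incr_step iB jB); [left | right; exact: IHm].
by apply: incr_minsym_exps; rewrite // -setD_eq0 -cards_eq0 mB'.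
Qed.

End AbsorbedShifts.

Lemma addr_sum_absorbed (V : nmodType) (I : Type) (r : seq I) (P : pred I)
    (F : I -> V) (S : V) :
  (forall i, P i -> S + F i = S) -> S + \sum_(i <- r | P i) F i = S.
Proof.
move=> FS; elim: r => [|i r IHr]; first by rewrite big_nil addr0.
by rewrite big_cons; case: ifP => // Pi; rewrite addrA FS.
Qed.

Section ProductIdentity.
Variables (X : comPzSemiRingType) (n : nat).
Implicit Types (c : 'I_n -> nat) (x : 'I_n -> X) (A : {set 'I_n}).

Lemma elsym_mul_Minsym c x k :
  elsym k x * Minsym (decr c) x =
  \sum_(A : {set 'I_n} | #|A| == k) \sum_(a <- minsym_exps (decr c)) monomial x (incr A a).
Proof.
rewrite /elsym mulr_suml; apply: eq_bigr => A _; rewrite mulr_sumr; apply: eq_bigr => a _.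
rewrite /monomial big_mkcond -big_split /=; apply: eq_bigr => i _.
by rewrite ffunE exprD; case: (i \in A); rewrite ?expr1 ?expr0 ?mul1r.
Qed.

Lemma Minsym_supp_partition c x :
  Minsym c x = \sum_(A : {set 'I_n} | #|A| == #|supp c|)
    \sum_(b <- minsym_exps c | supp b == A) monomial x b.
Proof.
rewrite /Minsym (exchange_big_dep xpredT) //= !big_seq; apply: eq_bigr => b bc.
rewrite (big_pred1 (supp b)) // => A /=; rewrite [supp b == A]eq_sym.
by case: (eqVneq A (supp b)) => [->|]; rewrite ?andbF // (card_supp_minsym bc) eqxx.
Qed.

Lemma sum_minsym_exps_supp c x A : #|A| = #|supp c| ->
  \sum_(b <- minsym_exps c | supp b == A) monomial x b =
  \sum_(a <- minsym_exps (decr c) | supp a \subset A) monomial x (incr A a).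
Proof.
move=> Ac; rewrite -big_filter -[RHS]big_filter.
transitivity (\sum_(b <- map (incr A)
    [seq a : {ffun 'I_n -> nat} <- minsym_exps (decr c) | supp a \subset A])
  monomial x b); last by rewrite big_map.
apply/perm_big/uniq_perm; rewrite ?filter_uniq ?undup_uniq //.
  rewrite map_inj_uniq ?filter_uniq ?undup_uniq // => a a' /ffunP aa'.
  by apply/ffunP => i; have := aa' i; rewrite !ffunE => /addnI.
move=> b; rewrite mem_filter; apply/andP/mapP => [[/eqP bA bc] | [a]].
  exists (decr b); last by rewrite -bA incr_decr.
  rewrite mem_filter -bA supp_decr_subset.
  by move: bc; rewrite mem_minsym_exps_decr => /andP[].
rewrite mem_filter => /andP[aA ac] ->.
by rewrite supp_incr // eqxx incr_minsym_exps.
Qed.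

Lemma Minsym_incr_partition c x :
  Minsym c x = \sum_(A : {set 'I_n} | #|A| == #|supp c|)
    \sum_(a <- minsym_exps (decr c) | supp a \subset A) monomial x (incr A a).
Proof.
by rewrite Minsym_supp_partition; apply: eq_bigr => A /eqP; exact: sum_minsym_exps_supp.
Qed.

Hypothesis HX : supertropical X.

Lemma elsym_mul_Minsym_decr c x : elsym #|supp c| x * Minsym (decr c) x = Minsym c x.
Proof.
rewrite elsym_mul_Minsym.
under eq_bigr => A _ do rewrite (bigID (fun a : {ffun 'I_n -> nat} => supp a \subset A)) /=.
rewrite big_split /= -Minsym_incr_partition.
apply: addr_sum_absorbed => A /eqP Ac; rewrite big_seq_cond.
by apply: addr_sum_absorbed => a /andP[ac aA]; apply: absorbed_incr.
Qed.

End ProductIdentity.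

Section ElementaryProducts.
Variables (X : comPzSemiRingType) (n : nat).
Implicit Types (c : 'I_n -> nat) (x : 'I_n -> X).

Lemma elsym0 x : elsym 0 x = 1.
Proof.
rewrite /elsym (big_pred1 set0) ?big_set0 // => A.
by rewrite /= cards_eq0.
Qed.

Lemma elsym_prod_pred1 x K : (K <= n)%N ->
  elsym K x = \prod_(k < n) elsym k.+1 x ^+ (k.+1 == K).
Proof.
case: K => [_ | K Kn]; first by rewrite elsym0 big1 // => k _; rewrite expr0.
rewrite (bigD1 (Ordinal Kn)) //= eqxx expr1 big1 ?mulr1 // => k kK.
by rewrite eqSS (negPf (kK : k != K :> nat)) expr0.
Qed.

Lemma Minsym_eq1 c x : (forall i, c i = 0%N) -> Minsym c x = 1.
Proof.
move=> c0; rewrite (@Minsym_perm_big _ _ c x [:: [ffun => 0%N]]) //.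
  by rewrite big_seq1; apply: big1 => i _; rewrite ffunE expr0.
move=> b; rewrite inE mem_minsym_exps; apply/eqP/idP => [-> | bc].
  by rewrite (eq_codom c0) (eq_codom (ffunE _)).
apply/ffunP => i; rewrite ffunE.
by have /codomP[j ->] : b i \in codom c by rewrite -(perm_mem bc) codom_f.
Qed.

Hypothesis HX : supertropical X.

Lemma Minsym_prod_elsym m c : (forall i, c i <= m)%N ->
  exists d : 'I_n -> nat, forall x, Minsym c x = \prod_(k < n) elsym k.+1 x ^+ d k.
Proof.
elim: m c => [|m IHm] c cm.
  exists (fun=> 0%N) => x; rewrite Minsym_eq1 => [|i]; last by apply/eqP; rewrite -leqn0.
  by rewrite big1 // => k _; rewrite expr0.
have decr_le i : (decr c i <= m)%N by rewrite ffunE; case: (c i) (cm i).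
have [d dc] := IHm (decr c) decr_le.
exists (fun k => d k + (k.+1 == #|supp c|))%N => x.
have supp_le : (#|supp c| <= n)%N by rewrite -[X in (_ <= X)%N]card_ord max_card.
rewrite -(elsym_mul_Minsym_decr HX) dc (elsym_prod_pred1 _ supp_le) mulrC -big_split.
by apply: eq_bigr => k _; rewrite exprD.
Qed.

End ElementaryProducts.

Unset Implicit Arguments.

Theorem lemma5p8 (X : comPzSemiRingType) (HX : supertropical X)
    (n : nat) (c : 'I_n -> nat) :
  exists d : 'I_n -> nat,
    forall x : 'I_n -> X,
      Minsym c x = \prod_(k < n) elsym k.+1 x ^+ d k.
Proof. exact: Minsym_prod_elsym HX _ c (@leq_bigmax _ c). Qed.
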